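(* Let $k,t\ge1$ and let $V$ be a word of length $kt$ that has at most $k$ distinct subwords of length $k$. Then $V$ contains a subword of the form $v^t$ for some nonempty word $v$.
   Context: A subword is a contiguous factor. *)

From mathcomp Require Import all_boot.
Set Implicit Arguments. Unset Strict Implicit. Unset Printing Implicit Defensive.

(* Words over an alphabet T (any eqType) are sequences [seq T].
   A subword is a contiguous factor (seq's [infix]). *)

Definition factors_of_length (T : eqType) (k : nat) (V : seq T) : seq (seq T) :=
  undup [seq take k (drop i V) | i <- iota 0 (size V - k).+1].

Definition wpow (T : Type) (v : seq T) (t : nat) : seq T := flatten (nseq t v).

From mathcomp Require Import all_boot.
From mathcomp Require Import zify.

Set Implicit Arguments. Unset Strict Implicit. Unset Printing Implicit Defensive.

(* Count the distinct factors of length n of V starting in the window of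
   positions 0 .. M = |V| - k.  This count is nondecreasing in n, starts at 1
   and is at most k for n = k, so it stalls at some n < k with at most n + 1
   factors; stalling means every length-n factor in the window is followed by a
   letter it determines.  Among the n + 2 factors starting at 0 .. n + 1 two
   coincide, say at i < j, and determinacy propagates this coincidence to the
   right: V is (j - i)-periodic from i up to position M + n, which is long
   enough to contain (j - i) t letters. *)

Section WindowFactors.
Variables (T : eqType) (x0 : T) (V : seq T) (M : nat).

Definition factor_at n i := take n (drop i V).

Definition window_factors n := undup [seq factor_at n i | i <- iota 0 M.+1].

Definition right_determined n := forall a b, a <= M -> b <= M ->
  factor_at n a = factor_at n b -> nth x0 V (a + n) = nth x0 V (b + n).

Lemma mem_window_factors n i : i <= M -> factor_at n i \in window_factors n.
Proof. by move=> hi; rewrite mem_undup; apply: map_f; rewrite mem_iota; lia. Qed.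

Lemma window_factorsP n z :
  z \in window_factors n -> exists2 i, i <= M & z = factor_at n i.
Proof.
by rewrite mem_undup => /mapP [i]; rewrite mem_iota => hi ->; exists i => //; lia.
Qed.

Lemma take_factor_at n i : take n (factor_at n.+1 i) = factor_at n i.
Proof. by rewrite /factor_at take_takel. Qed.

Lemma nth_factor_at n i r :
  r < n -> nth x0 (factor_at n i) r = nth x0 V (i + r).
Proof. by move=> hr; rewrite /factor_at nth_take // nth_drop. Qed.

Lemma eq_factor_at n a b : a + n <= size V -> b + n <= size V ->
  (forall r, r < n -> nth x0 V (a + r) = nth x0 V (b + r)) ->
  factor_at n a = factor_at n b.
Proof.
move=> ha hb h; apply: (eq_from_nth (x0 := x0)).
  by rewrite !size_take !size_drop; case: ifP; case: ifP; lia.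
move=> r; rewrite size_take size_drop => hr.
have hrn : r < n by move: hr; case: ifP; lia.
by rewrite !nth_factor_at // h.
Qed.

Lemma size_window_factors0 : 0 < size (window_factors 0).
Proof. by have := mem_window_factors 0 (leq0n M); case: (window_factors 0). Qed.

Lemma size_window_factors_leS n :
  size (window_factors n) <= size (window_factors n.+1).
Proof.
rewrite -(size_map (take n) (window_factors n.+1)).
apply: uniq_leq_size; first exact: undup_uniq.
move=> z /window_factorsP [i hi ->]; rewrite -take_factor_at.
by apply: map_f; apply: mem_window_factors.
Qed.

(* Two distinct extensions x, y of one length-n factor: removing x from the
   length-(n+1) factors still leaves every length-n factor as a prefix. *)
Lemma size_window_factors_ltS n a b : a <= M -> b <= M ->
  factor_at n a = factor_at n b -> nth x0 V (a + n) != nth x0 V (b + n) ->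
  size (window_factors n) < size (window_factors n.+1).
Proof.
move=> ha hb eab hne.
set x := factor_at n.+1 a; set y := factor_at n.+1 b.
have xy : x != y.
  apply: contra hne => /eqP e.
  by rewrite -(nth_factor_at a (ltnSn n)) -(nth_factor_at b (ltnSn n)) -/x e.
have xin : x \in window_factors n.+1 by apply: mem_window_factors.
have yin : y \in rem x (window_factors n.+1).
  by rewrite (mem_rem_uniq _ (undup_uniq _)) inE eq_sym xy mem_window_factors.
have : size (window_factors n) <= size (rem x (window_factors n.+1)).
  rewrite -(size_map (take n) (rem x (window_factors n.+1))).
  apply: uniq_leq_size; first exact: undup_uniq.
  move=> z /window_factorsP [c hc ->].
  have [hcx | hcx] := eqVneq (factor_at n.+1 c) x.
    rewrite -take_factor_at hcx /x take_factor_at eab -take_factor_at.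
    exact: map_f.
  rewrite -take_factor_at; apply: map_f.
  by rewrite (mem_rem_uniq _ (undup_uniq _)) inE hcx mem_window_factors.
rewrite size_rem //.
by case: (window_factors n.+1) xin => //= *; lia.
Qed.

Lemma right_determined_of_size n :
  size (window_factors n.+1) <= size (window_factors n) -> right_determined n.
Proof.
move=> hsz a b ha hb eab.
have [// | hne] := eqVneq (nth x0 V (a + n)) (nth x0 V (b + n)).
by have := size_window_factors_ltS ha hb eab hne; lia.
Qed.

Lemma exists_right_determined m : size (window_factors m) <= m ->
  exists n, [/\ n < m, right_determined n & size (window_factors n) <= n.+1].
Proof.
elim: m => [|m IH] hm; first by have := size_window_factors0; lia.
have [hle | hlt] := leqP (size (window_factors m.+1)) (size (window_factors m)).
  exists m; split => //; first exact: right_determined_of_size.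
  exact: leq_trans (size_window_factors_leS m) hm.
have [|n [hnm hdet hsz]] := IH; first by lia.
by exists n; split => //; lia.
Qed.

Lemma factor_at_collision n : n.+1 <= M -> size (window_factors n) <= n.+1 ->
  exists i j, [/\ i < j, j <= n.+1 & factor_at n i = factor_at n j].
Proof.
move=> hnM hsz; set s := [seq factor_at n i | i <- iota 0 n.+2].
have : ~~ uniq s.
  apply/negP => u; have : size s <= size (window_factors n).
    apply: uniq_leq_size => // z /mapP [i]; rewrite mem_iota => hi ->.
    by apply: mem_window_factors; lia.
  by rewrite size_map size_iota; lia.
move=> /(uniqPn [::]) [i [j [hij hj]]]; move: hj; rewrite size_map size_iota => hj.
rewrite !(nth_map 0) ?size_iota ?nth_iota; try lia.
by rewrite !add0n => heq; exists i, j; split => //; lia.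
Qed.

Lemma right_determined_periodic n i j : M + n <= size V -> right_determined n ->
  i <= j -> factor_at n i = factor_at n j ->
  forall x, j + x <= M + n -> nth x0 V (i + x) = nth x0 V (j + x).
Proof.
move=> hV hdet hij heq; elim/ltn_ind=> x IH hx.
have [hxn | hnx] := ltnP x n; first by rewrite -!(nth_factor_at _ hxn) heq.
have hshift : forall c, c + (x - n) + n = c + x by lia.
rewrite -[i + x]hshift -[j + x]hshift; apply: hdet; try lia.
apply: eq_factor_at; try lia.
by move=> r hr; rewrite -!addnA; apply: IH; lia.
Qed.

End WindowFactors.

Lemma wpow_take_periodic (T : eqType) (x0 : T) p t (s : seq T) L :
  (forall x, x + p < L -> nth x0 s x = nth x0 s (x + p)) ->
  p * t <= L -> L <= size s -> wpow (take p s) t = take (p * t) s.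
Proof.
elim: t s L => [|t IH] s L hp hL hs; first by rewrite muln0 take0.
rewrite /wpow /= -/(wpow _ _).
case: t IH hL => [|t] IH hL; first by rewrite /wpow /= cats0 muln1.
rewrite mulnS takeD; congr (_ ++ _).
have -> : take p s = take p (drop p s).
  apply: (eq_from_nth (x0 := x0)).
    by rewrite !size_take size_drop; case: ifP; case: ifP; lia.
  move=> r; rewrite size_take => hr.
  have hrp : r < p by move: hr; case: ifP; lia.
  by rewrite !nth_take // nth_drop addnC hp //; lia.
apply: (IH _ (L - p)); last by rewrite size_drop; lia.
  by move=> x hx; rewrite !nth_drop addnA; apply: hp; lia.
by lia.
Qed.

Theorem lemmac (T : eqType) (k t : nat) (V : seq T) :
  1 <= k -> 1 <= t -> size V = k * t ->
  size (factors_of_length k V) <= k ->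
  exists v : seq T, v != [::] /\ infix (wpow v t) V.
Proof.
move=> hk ht hV hF.
have [ht1 | ht2] := ltnP t 2.
  have -> : t = 1 by lia.
  exists V; rewrite /wpow /= cats0 infix_refl; split => //.
  by apply/eqP => V0; move: hV; rewrite V0 /=; lia.
case: V hV hF => [|x0 V'] hV hF; first by move: hV => /=; lia.
set V := x0 :: V' in hV hF *; set M := k * t - k.
have hFw : size (window_factors V M k) <= k.
  by move: hF; rewrite /window_factors /M -hV.
have hkM : k <= M by rewrite /M; nia.
have hVM : size V = M + k by rewrite hV /M; nia.
clearbody M.
have [n [hnk hdet hsz]] := exists_right_determined x0 hFw.
have hnM : n.+1 <= M by lia.
have [i [j [hij hjn heq]]] := factor_at_collision hnM hsz.
have hper x : x + (j - i) < M + n + 1 - i ->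
    nth x0 (drop i V) x = nth x0 (drop i V) (x + (j - i)).
  move=> hx; rewrite !nth_drop (_ : i + (x + (j - i)) = j + x); last by lia.
  by apply: (right_determined_periodic _ hdet (ltnW hij) heq); lia.
exists (take (j - i) (drop i V)); split.
  by rewrite -size_eq0 size_take size_drop hVM; case: ifP; lia.
rewrite (wpow_take_periodic hper); [| nia | by rewrite size_drop hVM; lia].
by apply/infixP; exists (take i V), (drop ((j - i) * t) (drop i V)); rewrite !cat_take_drop.
Qed.
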